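(* Let $f:\mathbb{R}^n\to\mathbb{R}$ be convex and differentiable with $\nabla f$ $L$-Lipschitz continuous, and assume $X^*$ is non-empty. Then the sequence $\{x^k\}$ generated by Algorithm 3 (run without stopping, with $\nabla f(x^k)\ne0$ for all $k$) converges to a point of $X^*$.
   Context: $X^*=\{x:\nabla f(x)=0\}$ (the set of minimizers of the convex $f$). Algorithm 3: parameters $0<\mu<\nu<1$, $0<\underline{h}<1\le\gamma_0^0\le\overline{h}<\frac4L$, $0\le\beta\le1$, $\theta\in(0,1)$, $\tau>1$, $\eta\in(0,2)$, starting point $x^0$; run while $\nabla f(x^k)\neq0$. At iteration $k$: for $\gamma>0$ let $z^k(\gamma)=x^k-\gamma\nabla f(x^k)$ and $r_k(\gamma)=\gamma\|\nabla f(z^k(\gamma))-\nabla f(x^k)\|/\|z^k(\gamma)-x^k\|$; starting from $\gamma_0^k$, while $r_k(\gamma_l^k)>\nu$ set $\gamma_{l+1}^k=\gamma_l^k\theta\min\{1,1/r_k(\gamma_l^k)\}$; let $h_k$ be the first $\gamma_l^k$ with $r_k(\gamma_l^k)\le\nu$. Then $z^k=x^k-h_k\nabla f(x^k)$ and $x^{k+1}=x^k-\eta\alpha_kh_k\big(\nabla f(x^k)-\beta(\nabla f(x^k)-\nabla f(z^k))\big)$ with $$\alpha_k=\frac{(1-\beta)\left(1-\frac{Lh_k}{4}\right)\|x^k-z^k\|^2+\beta\langle x^k-z^k,h_k\nabla f(z^k)\rangle}{h_k^2\|\nabla f(x^k)-\beta(\nabla f(x^k)-\nabla f(z^k))\|^2};$$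 finally $\gamma_0^{k+1}=\mathbf{P}_{[\underline{h},\overline{h}]}(\tau h_k)$ if $r_k(h_k)\le\mu$, else $\gamma_0^{k+1}=\mathbf{P}_{[\underline{h},\overline{h}]}(h_k)$, where $\mathbf{P}_{[a,b]}$ is projection onto $[a,b]$. *)

From HB Require Import structures.
From mathcomp Require Import all_boot all_order all_algebra.
From mathcomp Require Import all_classical all_reals all_analysis.
Set Implicit Arguments. Unset Strict Implicit. Unset Printing Implicit Defensive.
Import Order.TTheory GRing.Theory Num.Theory.
Import numFieldNormedType.Exports.
Local Open Scope ring_scope.

Section Defs.
Variables (R : realType) (n : nat).
Local Notation V := 'rV[R]_n.

Definition dotv (u v : V) : R := \sum_(i < n) u 0 i * v 0 i.
Definition enorm (u : V) : R := Num.sqrt (dotv u u).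

Definition grad (f : V -> R) (x : V) : V :=
  \row_(i < n) derive f x (delta_mx 0 i).

Definition convex_fun (f : V -> R) : Prop :=
  forall (x y : V) (t : R), 0 <= t <= 1 ->
    f (t *: x + (1 - t) *: y) <= t * f x + (1 - t) * f y.

Definition lipschitz_with (L : R) (g : V -> V) : Prop :=
  forall x y : V, enorm (g x - g y) <= L * enorm (x - y).

Definition proj_int (a b t : R) : R := Num.min b (Num.max a t).

Definition ratio (f : V -> R) (x : V) (gam : R) : R :=
  let z := x - gam *: grad f x in
  gam * enorm (grad f z - grad f x) / enorm (z - x).

Fixpoint backtrack (f : V -> R) (x : V) (theta g0 : R) (l : nat) : R :=
  match l with
  | 0 => g0
  | l'.+1 => let g := backtrack f x theta g0 l' in
             g * theta * Num.min 1 (1 / ratio f x g)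
  end.

Definition alpha (f : V -> R) (L beta : R) (x : V) (h : R) : R :=
  let z := x - h *: grad f x in
  ((1 - beta) * (1 - L * h / 4) * enorm (x - z) ^+ 2
     + beta * dotv (x - z) (h *: grad f z))
  / (h ^+ 2 * enorm (grad f x - beta *: (grad f x - grad f z)) ^+ 2).

Definition algorithm3 (f : V -> R) (L mu nu hlo hup beta theta tau eta : R)
    (x0 : V) (g00 : R) (x : nat -> V) (h g0 : nat -> R) : Prop :=
  [/\ x 0%N = x0, g0 0%N = g00 &
   forall k : nat,
     [/\ exists l : nat,
           h k = backtrack f (x k) theta (g0 k) l
           /\ ratio f (x k) (h k) <= nu
           /\ (forall l' : nat, (l' < l)%N ->
                 nu < ratio f (x k) (backtrack f (x k) theta (g0 k) l')),
         x k.+1 = x k - (eta * alpha f L beta (x k) (h k) * h k) *: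
                    (grad f (x k) - beta *: (grad f (x k) - grad f (x k - h k *: grad f (x k))))
       & g0 k.+1 = if ratio f (x k) (h k) <= mu
                   then proj_int hlo hup (tau * h k)
                   else proj_int hlo hup (h k)]].

End Defs.

From Pilot Require Import Defs.
From HB Require Import structures.
From mathcomp Require Import all_boot all_order all_algebra.
From mathcomp Require Import all_classical all_reals all_analysis.
From mathcomp Require Import ring lra.
Import Order.TTheory GRing.Theory Num.Theory.
Import numFieldNormedType.Exports.
Set Implicit Arguments. Unset Strict Implicit. Unset Printing Implicit Defensive.
Local Open Scope ring_scope.
Local Open Scope classical_set_scope.

(* Algorithm 3 is Fejer monotone with respect to the minimizers.  At a minimizer xs
   the gradient is cocoercive, <x - xs, g> >= |g|^2 / L, and at the extrapolated
   point z = x - h g it is monotone, so the search direction d satisfies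
   <x - xs, d> >= h M, where alpha = M / |d|^2.  The step of length eta alpha h along
   d then decreases |x - xs|^2 by eta (2 - eta) h^2 M^2 / |d|^2, and the line search
   (h bounded below, ratio <= nu < 1) bounds this below by a fixed multiple of
   |grad f x|^2.  Hence the gradients are square summable, the bounded iterates have
   a cluster point, which is a minimizer by continuity of the gradient, and Fejer
   monotonicity with respect to that point forces convergence. *)

Section InnerProduct.
Variables (R : realType) (n : nat).
Local Notation V := 'rV[R]_n.
Implicit Types u v w : V.

Lemma dotvC u v : dotv u v = dotv v u.
Proof. by apply: eq_bigr => i _; rewrite mulrC. Qed.

Lemma dotvDl u v w : dotv (u + v) w = dotv u w + dotv v w.
Proof. by rewrite /dotv -big_split; apply: eq_bigr => i _; rewrite mxE mulrDl. Qed.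

Lemma dotvZl (a : R) u v : dotv (a *: u) v = a * dotv u v.
Proof. by rewrite /dotv mulr_sumr; apply: eq_bigr => i _; rewrite mxE mulrA. Qed.

Lemma dotvNl u v : dotv (- u) v = - dotv u v.
Proof. by rewrite -scaleN1r dotvZl mulN1r. Qed.

Lemma dotvBl u v w : dotv (u - v) w = dotv u w - dotv v w.
Proof. by rewrite dotvDl dotvNl. Qed.

Lemma dotvDr u v w : dotv w (u + v) = dotv w u + dotv w v.
Proof. by rewrite dotvC dotvDl !(dotvC w). Qed.

Lemma dotvZr (a : R) u v : dotv v (a *: u) = a * dotv v u.
Proof. by rewrite dotvC dotvZl dotvC. Qed.

Lemma dotvNr u v : dotv v (- u) = - dotv v u.
Proof. by rewrite dotvC dotvNl dotvC. Qed.

Lemma dotvBr u v w : dotv w (u - v) = dotv w u - dotv w v.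
Proof. by rewrite dotvDr dotvNr. Qed.

Lemma dotv0l u : dotv 0 u = 0.
Proof. by rewrite /dotv big1 // => i _; rewrite mxE mul0r. Qed.

Lemma dotv0r u : dotv u 0 = 0.
Proof. by rewrite dotvC dotv0l. Qed.

Lemma dotv_ge0 u : 0 <= dotv u u.
Proof. by rewrite /dotv sumr_ge0 // => i _; rewrite -expr2 sqr_ge0. Qed.

Lemma dotv_eq0 u : dotv u u = 0 -> u = 0.
Proof.
move=> u0; apply/rowP => i; rewrite mxE.
have sq_ge0 (j : 'I_n) : predT j -> 0 <= u 0 j * u 0 j by rewrite -expr2 sqr_ge0.
have /eqP := @psumr_eq0P _ _ predT _ sq_ge0 u0 i isT.
by rewrite -expr2 sqrf_eq0 => /eqP.
Qed.

Lemma dotvNN u v : dotv (u - v) (u - v) = dotv (v - u) (v - u).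
Proof. by rewrite -opprB dotvNl dotvNr opprK. Qed.

Lemma dotv_sqrBZ u v (s : R) :
  dotv (u - s *: v) (u - s *: v) = dotv u u - 2 * s * dotv u v + s ^+ 2 * dotv v v.
Proof. by rewrite !dotvBl !dotvBr !dotvZl !dotvZr (dotvC v u); ring. Qed.

Lemma dotv_young u v (s : R) : 0 < s -> 2 * dotv u v <= dotv u u / s + s * dotv v v.
Proof.
move=> s0; have := dotv_ge0 (u - s *: v); rewrite dotv_sqrBZ => sq_ge0.
rewrite -(ler_pM2l s0) mulrDr [s * (_ / s)]mulrC divfK ?gt_eqF //.
by rewrite expr2 in sq_ge0; lra.
Qed.

Lemma dotv_sqrD_le u v : dotv (u + v) (u + v) <= 2 * dotv u u + 2 * dotv v v.
Proof.
have := dotv_young u v ltr01; rewrite divr1 mul1r.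
by rewrite !dotvDl !dotvDr (dotvC v u); lra.
Qed.

Lemma dotv_sqr_step_le (u d : V) (eta a h M : R) :
  0 <= eta -> 0 <= a -> 0 <= h -> a * dotv d d = M -> h * M <= dotv u d ->
  dotv (u - (eta * a * h) *: d) (u - (eta * a * h) *: d)
    <= dotv u u - eta * (2 - eta) * (h ^+ 2 * (a * M)).
Proof.
move=> eta0 a0 h0 aM hM; rewrite dotv_sqrBZ.
have s0 : 0 <= eta * a * h by rewrite !mulr_ge0.
have := ler_wpM2l s0 hM.
have -> : (eta * a * h) ^+ 2 * dotv d d = eta ^+ 2 * (h ^+ 2 * (a * M)).
  by rewrite -aM; ring.
have -> : eta * a * h * (h * M) = eta * (h ^+ 2 * (a * M)) by ring.
set X := h ^+ 2 * (a * M); rewrite !expr2; nra.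
Qed.

Lemma enorm_ge0 u : 0 <= enorm u.
Proof. exact: sqrtr_ge0. Qed.

Lemma enorm_sqr u : enorm u ^+ 2 = dotv u u.
Proof. by rewrite sqr_sqrtr // dotv_ge0. Qed.

Lemma enormZ (a : R) u : 0 <= a -> enorm (a *: u) = a * enorm u.
Proof.
move=> a0; rewrite /enorm dotvZl dotvZr mulrA -expr2 sqrtrM ?sqr_ge0 //.
by rewrite sqrtr_sqr ger0_norm.
Qed.

Lemma enormN u : enorm (- u) = enorm u.
Proof. by rewrite /enorm dotvNl dotvNr opprK. Qed.

Lemma enorm_gt0 u : u != 0 -> 0 < enorm u.
Proof.
move=> u0; rewrite sqrtr_gt0 lt_def dotv_ge0 andbT.
by apply: contra u0 => /eqP/dotv_eq0/eqP.
Qed.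

Lemma coord_sqr_le_dotv u i : u 0 i ^+ 2 <= dotv u u.
Proof.
rewrite /dotv (bigD1 i) //= -expr2 lerDl.
by apply: sumr_ge0 => j _; rewrite -expr2 sqr_ge0.
Qed.

(* [`|u|] is the max norm of the matrix [u], which induces the topology of ['rV_n]. *)
Lemma dotv_le_mx_norm u : dotv u u <= n%:R * `|u| ^+ 2.
Proof.
have -> : (n%:R : R) = \sum_(i < n) 1 by rewrite sumr_const card_ord.
rewrite /dotv mulr_suml; apply: ler_sum => i _; rewrite mul1r -expr2 -real_normK ?num_real //.
rewrite lerXn2r ?nnegrE ?normr_ge0 //.
by rewrite [leRHS]mx_normrE; apply/bigmax_geP; right; exists (0, i).
Qed.

Lemma mx_norm_lt_dotv u (e : R) : 0 < e -> dotv u u < e ^+ 2 -> `|u| < e.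
Proof.
move=> e0 ue.
have [->|/mx_norm_neq0 [[i j] /= uij]] := eqVneq `|u| 0; first by [].
have -> : `|u| = `|u i j| by exact: uij.
rewrite -(@ltr_pXn2r _ 2%N) ?nnegrE ?normr_ge0 ?ltW // real_normK ?num_real //.
by rewrite (ord1 i); apply: le_lt_trans (coord_sqr_le_dotv _ _) ue.
Qed.

End InnerProduct.

Section Gradient.
Variables (R : realType) (n : nat) (f : 'rV[R]_n -> R).
Hypothesis fdiff : forall y, differentiable f y.
Local Notation V := 'rV[R]_n.

Lemma derive_grad (p v : V) : derive f p v = dotv (grad f p) v.
Proof.
rewrite deriveE // {1}(row_sum_delta v) linear_sum /dotv; apply: eq_bigr => i _.
by rewrite linearZ /= -deriveE // /grad mxE mulrC.
Qed.

Lemma is_derive_line (a d : V) (t : R) :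
  is_derive t 1 (fun s : R => f (a + s *: d)) (dotv (grad f (a + t *: d)) d).
Proof.
have quotE : (fun h : R => h^-1 *: (((fun s => f (a + s *: d)) \o shift t) (h *: 1)
                                    - f (a + t *: d)))
    = (fun h : R => h^-1 *: ((f \o shift (a + t *: d)) (h *: d) - f (a + t *: d))).
  apply/funext => h /=; congr (_ *: (f _ - _)).
  by rewrite scalerDl [h *: 1 : R]mulr1 addrCA.
have D : derivable (fun s : R => f (a + s *: d)) t 1.
  by rewrite /derivable quotE; exact: diff_derivable.
by apply: DeriveDef => //; rewrite /derive quotE -/(derive f _ d) derive_grad.
Qed.

Variable L : R.
Hypothesis L0 : 0 < L.
Hypothesis Lip : lipschitz_with L (grad f).

Lemma grad_dist_sqr_le (u v : V) :
  dotv (grad f u - grad f v) (grad f u - grad f v) <= L ^+ 2 * dotv (u - v) (u - v).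
Proof.
have L_enorm_ge0 : 0 <= L * enorm (u - v) by rewrite mulr_ge0 ?enorm_ge0 ?ltW.
by rewrite -!enorm_sqr -exprMn (@ler_pXn2r _ 2%N) ?nnegrE ?enorm_ge0 //; exact: Lip.
Qed.

Lemma grad_inner_le (u v : V) :
  dotv (grad f u - grad f v) (u - v) <= L * dotv (u - v) (u - v).
Proof.
have := dotv_young (grad f u - grad f v) (u - v) L0.
have : dotv (grad f u - grad f v) (grad f u - grad f v) / L <= L * dotv (u - v) (u - v).
  by rewrite ler_pdivrMr // mulrAC -expr2 grad_dist_sqr_le.
lra.
Qed.

Lemma descent_lemma (a d : V) :
  f (a + d) <= f a + dotv (grad f a) d + L / 2 * dotv d d.
Proof.
set c1 := dotv (grad f a) d; set c2 := L / 2 * dotv d d.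
pose psi : R -> R := (fun s => f (a + s *: d)) - (c1 \*: id + c2 \*: (id * id)).
pose dpsi : R -> R := fun s => dotv (grad f (a + s *: d)) d - (c1 + 2 * s * c2).
have Dpsi (s : R) : is_derive s 1 psi (dpsi s).
  apply: is_derive_eq; first by apply: is_deriveB; exact: is_derive_line.
  congr (_ - _); rewrite -[c1 *: 1]/(c1 * 1) -[s *: (1 : R)]/(s * 1).
  by rewrite -[c2 *: _]/(c2 * _); ring.
have psi_cont : {within `[0, 1], continuous psi}.
  apply: continuous_subspaceT => s; apply: differentiable_continuous.
  by apply/derivable1_diffP; case: (Dpsi s).
have [c /[!in_itv] /andP[c0 _] psiE] := MVT ltr01 (fun s _ => Dpsi s) psi_cont.
have dpsi_le0 : dpsi c <= 0.
  have : c * (dotv (grad f (a + c *: d)) d - c1) <= L * (c * (c * dotv d d)).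
    have := grad_inner_le (a + c *: d) a.
    by rewrite addrAC subrr add0r !dotvZl !dotvZr dotvBl.
  by rewrite /dpsi /c2 -(pmulr_rle0 _ c0); lra.
have : f (a + 1 *: d) - (c1 * 1 + c2 * (1 * 1))
       - (f (a + 0 *: d) - (c1 * 0 + c2 * (0 * 0))) <= 0.
  by rewrite -[X in X <= 0]/(psi 1 - psi 0) psiE subr0 mulr1.
by rewrite scale1r scale0r addr0 !mulr1 !mulr0; lra.
Qed.

Hypothesis fconv : convex_fun f.

Lemma convex_grad_ineq (a d : V) : f a + dotv (grad f a) d <= f (a + d).
Proof.
have [D E] := is_derive_line a d 0; rewrite scale0r addr0 in E.
suff : 'D_1 (fun s : R => f (a + s *: d)) 0 <= f (a + d) - f a by rewrite E; lra.
have Dright : (fun h : R => h^-1 *: (((fun s => f (a + s *: d)) \o shift 0) (h *: 1)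
                                     - f (a + 0 *: d)))
     @ 0^'+ --> 'D_1 (fun s : R => f (a + s *: d)) 0.
  apply: cvg_trans D; apply: cvg_app; apply: within_subset => y /= y0.
  by rewrite gt_eqF.
apply: (closed_cvg _ (@closed_le R (f (a + d) - f a)) _ _ Dright).
near=> h.
have h0 : 0 < h by near: h; exact: nbhs_right_gt.
have h1 : h < 1 by near: h; exact: nbhs_right_lt.
rewrite /= scale0r !addr0 [h *: 1 : R]mulr1.
have h01 : 0 <= h <= 1 by rewrite !ltW.
have := fconv (a + d) a h01.
have -> : h *: (a + d) + (1 - h) *: a = a + h *: d.
  by rewrite scalerDr scalerBl scale1r addrAC [h *: a + _]addrC subrK.
by rewrite -[h^-1 *: _]/(h^-1 * _) ler_pdivrMl // mulrBl mul1r mulrBr; lra.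
Unshelve. all: by end_near.
Qed.

Lemma grad_monotone (a b : V) : 0 <= dotv (grad f a - grad f b) (a - b).
Proof.
have := convex_grad_ineq a (b - a); have := convex_grad_ineq b (a - b).
rewrite !subrKC -opprB !dotvNr dotvBl; lra.
Qed.

(* Descent lemma at [x - g/L] and at [xs + g/L], each compared with the gradient
   inequality at the other point. *)
Lemma grad_cocoercive_min (xs x : V) : grad f xs = 0 ->
  dotv (grad f x) (grad f x) / L <= dotv (x - xs) (grad f x).
Proof.
move=> gxs; set g := grad f x; set G := dotv g g; set m := L^-1.
have D1 := descent_lemma x (- (m *: g)).
have G1 := convex_grad_ineq xs (x - m *: g - xs).
have D2 := descent_lemma xs (m *: g).
have G2 := convex_grad_ineq x (xs + m *: g - x).
rewrite subrKC gxs dotv0l addr0 in G1.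
rewrite gxs dotv0l addr0 in D2.
rewrite subrKC !dotvBr !dotvDr dotvZr -/G in G2.
rewrite dotvNr dotvNl dotvNr opprK !dotvZl !dotvZr -/G in D1.
rewrite !dotvZl !dotvZr -/G in D2.
have E : L / 2 * (m * (m * G)) = m * G / 2.
  by rewrite /m; field; rewrite gt_eqF.
rewrite E in D1 D2.
rewrite dotvBl (dotvC x g) (dotvC xs g) mulrC.
lra.
Qed.

End Gradient.

Definition search_dir (R : realType) (n : nat) (f : 'rV[R]_n -> R) (beta : R)
    (x : 'rV[R]_n) (h : R) : 'rV[R]_n :=
  grad f x - beta *: (grad f x - grad f (x - h *: grad f x)).

(* [alpha f L beta x h] is [alpha_num f L beta x h / dotv d d] for the search
   direction [d], once the common factor [h ^+ 2] is cancelled. *)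
Definition alpha_num (R : realType) (n : nat) (f : 'rV[R]_n -> R) (L beta : R)
    (x : 'rV[R]_n) (h : R) : R :=
  (1 - beta) * (1 - L * h / 4) * dotv (grad f x) (grad f x)
  + beta * dotv (grad f x) (grad f (x - h *: grad f x)).

Section Step.
Variables (R : realType) (n : nat) (f : 'rV[R]_n -> R).
Local Notation V := 'rV[R]_n.

Lemma ratioE (x : V) (gam : R) : 0 < gam ->
  Defs.ratio f x gam = enorm (grad f (x - gam *: grad f x) - grad f x) / enorm (grad f x).
Proof.
move=> gam0; rewrite /Defs.ratio /= addrAC subrr add0r enormN (enormZ _ (ltW gam0)).
by rewrite -mulf_div mulfV ?mul1r // gt_eqF.
Qed.

Variable L : R.
Hypothesis Lip : lipschitz_with L (grad f).

Lemma ratio_le (x : V) (gam : R) : grad f x != 0 -> 0 < gam -> Defs.ratio f x gam <= L * gam.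
Proof.
move=> gx0 gam0; rewrite ratioE // ler_pdivrMr ?enorm_gt0 //.
have := Lip (x - gam *: grad f x) x.
by rewrite addrAC subrr add0r enormN (enormZ _ (ltW gam0)) mulrA.
Qed.

Hypothesis fdiff : forall y, differentiable f y.
Hypothesis fconv : convex_fun f.
Hypothesis L0 : 0 < L.

Variables (beta nu : R) (x : V) (h : R).
Hypotheses (beta0 : 0 <= beta) (beta1 : beta <= 1) (h0 : 0 < h).
Let g := grad f x.
Let e := grad f (x - h *: g) - g.

Lemma search_dirE : search_dir f beta x h = g + beta *: e.
Proof. by rewrite /search_dir -/g /e -scalerN opprB. Qed.

Lemma grad_step_diff_le : grad f x != 0 -> Defs.ratio f x h <= nu -> dotv e e <= nu ^+ 2 * dotv g g.
Proof.
move=> gx0; rewrite ratioE // ler_pdivrMr ?enorm_gt0 // => rat.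
rewrite -!enorm_sqr -exprMn (@ler_pXn2r _ 2%N) ?nnegrE ?enorm_ge0 //.
exact: le_trans (enorm_ge0 _) rat.
Qed.

Lemma search_dir_sqr_le : dotv e e <= dotv g g ->
  dotv (search_dir f beta x h) (search_dir f beta x h) <= 4 * dotv g g.
Proof.
move=> eg; rewrite search_dirE.
have := dotv_sqrD_le g (beta *: e); rewrite dotvZl dotvZr.
have : beta * (beta * dotv e e) <= dotv e e.
  rewrite mulrA ler_piMl ?dotv_ge0 // -expr2 expr_le1 //.
lra.
Qed.

Lemma alpha_num_ge (c : R) : dotv e e <= nu ^+ 2 * dotv g g ->
  c <= 1 - L * h / 4 -> c <= (1 - nu ^+ 2) / 2 ->
  c * dotv g g <= alpha_num f L beta x h.
Proof.
move=> enu cLh cnu; rewrite /alpha_num -/g.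
have G0 := dotv_ge0 g.
have ge_low : - (dotv g g + dotv e e) <= 2 * dotv g e.
  by have := dotv_young g (- e) ltr01; rewrite divr1 mul1r dotvNr dotvNl dotvNr opprK; lra.
have extra : c * dotv g g <= dotv g (grad f (x - h *: g)).
  rewrite -[grad f _](subrK g) -/e dotvDr.
  have : c * dotv g g <= (1 - nu ^+ 2) / 2 * dotv g g by rewrite ler_wpM2r.
  lra.
have grad_part : c * dotv g g <= (1 - L * h / 4) * dotv g g by rewrite ler_wpM2r.
have beta1' : 0 <= 1 - beta by rewrite subr_ge0.
have := ler_wpM2l beta0 extra; have := ler_wpM2l beta1' grad_part.
rewrite -mulrA; lra.
Qed.

Lemma alphaE : alpha f L beta x h
  = alpha_num f L beta x h / dotv (search_dir f beta x h) (search_dir f beta x h).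
Proof.
rewrite /alpha /alpha_num /= subKr -/(search_dir f beta x h) !enorm_sqr -/g.
rewrite !dotvZl !dotvZr.
set G := dotv g g; set P := dotv g _.
have -> : (1 - beta) * (1 - L * h / 4) * (h * (h * G)) + beta * (h * (h * P))
    = h ^+ 2 * ((1 - beta) * (1 - L * h / 4) * G + beta * P) by ring.
by rewrite invfM mulrACA mulfV ?mul1r // expf_neq0 // gt_eqF.
Qed.

Lemma search_dir_inner_ge (xs : V) : grad f xs = 0 ->
  h * alpha_num f L beta x h <= dotv (x - xs) (search_dir f beta x h).
Proof.
move=> gxs; set z := x - h *: g; set u := x - xs.
have coco := grad_cocoercive_min fdiff L0 Lip fconv x gxs; rewrite -/g -/u in coco.
have mono := grad_monotone fdiff fconv z xs; rewrite gxs subr0 in mono.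
have uE : u = h *: g + (z - xs) by rewrite /u /z addrA subrKC.
have step_le : h * (1 - L * h / 4) <= L^-1.
  have -> : L^-1 = h * (1 - L * h / 4) + L^-1 * (1 - L * h / 2) ^+ 2.
    by field; rewrite gt_eqF.
  by rewrite lerDl mulr_ge0 ?sqr_ge0 // invr_ge0 ltW.
have grad_part : h * (1 - L * h / 4) * dotv g g <= dotv u g.
  by apply: le_trans coco; rewrite mulrC ler_wpM2l ?dotv_ge0.
have beta1' : 0 <= 1 - beta by rewrite subr_ge0.
have ugz : dotv u (grad f z) = h * dotv g (grad f z) + dotv (grad f z) (z - xs).
  by rewrite uE dotvDl dotvZl (dotvC (z - xs)).
rewrite /search_dir /alpha_num -/g -/z dotvBr dotvZr dotvBr ugz.
have := ler_wpM2l beta1' grad_part; have := mulr_ge0 beta0 mono.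
lra.
Qed.

Lemma fejer_step (xs xn : V) (eta c hmin : R) :
  grad f xs = 0 -> grad f x != 0 -> Defs.ratio f x h <= nu ->
  0 <= eta <= 2 -> 0 < c -> c <= 1 - L * h / 4 -> c <= (1 - nu ^+ 2) / 2 ->
  0 <= hmin <= h ->
  xn = x - (eta * alpha f L beta x h * h) *: search_dir f beta x h ->
  dotv (xn - xs) (xn - xs)
    <= dotv (x - xs) (x - xs) - eta * (2 - eta) * (hmin * c) ^+ 2 / 4 * dotv g g.
Proof.
move=> gxs gx0 rat /andP[eta0 eta2] c0 cLh cnu /andP[hmin0 hmin_h] ->.
set d := search_dir f beta x h; set M := alpha_num f L beta x h.
have G0 : 0 < dotv g g by rewrite -enorm_sqr exprn_gt0 ?enorm_gt0.
have enu := grad_step_diff_le gx0 rat.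
have eG : dotv e e <= dotv g g.
  by apply: le_trans enu _; rewrite ler_piMl ?dotv_ge0 //; lra.
have Mge := alpha_num_ge enu cLh cnu.
have Dle := search_dir_sqr_le eG; rewrite -/d in Dle.
have inner := search_dir_inner_ge gxs; rewrite -/d -/M in inner.
have M0 : 0 < M by apply: lt_le_trans Mge; rewrite mulr_gt0.
have D0 : 0 < dotv d d.
  rewrite lt_def dotv_ge0 andbT; apply: contraTneq inner => /dotv_eq0 ->.
  by rewrite dotv0r -ltNge mulr_gt0.
have aE : alpha f L beta x h = M / dotv d d by rewrite alphaE.
have a0 : 0 <= M / dotv d d by rewrite divr_ge0 ?ltW.
have aM : M / dotv d d * dotv d d = M by rewrite divfK ?gt_eqF.
rewrite aE addrAC.
apply: le_trans (dotv_sqr_step_le eta0 a0 (ltW h0) aM inner) _.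
(* [M ^+ 2 / dotv d d >= (c G) ^+ 2 / (4 G)] since [M >= c G] and [dotv d d <= 4 G] *)
have cG4 : 0 <= c ^+ 2 * dotv g g / 4 by rewrite divr_ge0 // mulr_ge0 ?sqr_ge0 ?dotv_ge0.
have aM_ge : c ^+ 2 * dotv g g / 4 <= M / dotv d d * M.
  rewrite [leRHS]mulrAC ler_pdivlMr // -expr2.
  apply: (@le_trans _ _ (c ^+ 2 * dotv g g / 4 * (4 * dotv g g))).
    by apply: ler_wpM2l.
  have -> : c ^+ 2 * dotv g g / 4 * (4 * dotv g g) = (c * dotv g g) ^+ 2 by field.
  have cG0 : 0 <= c * dotv g g by rewrite mulr_ge0 ?ltW.
  by rewrite !expr2; exact: ler_pM.
have hmin_sqr : hmin ^+ 2 <= h ^+ 2 by rewrite lerXn2r ?nnegrE // ltW.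
have := ler_pM (sqr_ge0 hmin) cG4 hmin_sqr aM_ge.
have eta_eta : 0 <= eta * (2 - eta) by rewrite mulr_ge0 // subr_ge0.
move=> /(ler_wpM2l eta_eta); rewrite lerD2l lerN2.
have -> : eta * (2 - eta) * (hmin * c) ^+ 2 / 4 * dotv g g
    = eta * (2 - eta) * (hmin ^+ 2 * (c ^+ 2 * dotv g g / 4)) by ring.
exact.
Qed.
End Step.

Section Backtracking.
Variables (R : realType) (n : nat) (f : 'rV[R]_n -> R) (L theta nu : R).
Local Notation V := 'rV[R]_n.
Hypotheses (theta0 : 0 < theta) (theta1 : theta < 1) (nu0 : 0 < nu).
Variables (x : V) (g0k : R) (l : nat).
Hypothesis g0k0 : 0 < g0k.
Hypothesis rejected :
  forall l', (l' < l)%N -> nu < Defs.ratio f x (backtrack f x theta g0k l').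

Lemma backtrack_gt0_le j : (j <= l)%N -> 0 < backtrack f x theta g0k j <= g0k.
Proof.
elim: j => [|j IHj] jl /=; first by rewrite lexx andbT.
have /andP[b0 bg] := IHj (ltnW jl).
set b := backtrack f x theta g0k j in b0 bg *.
have r0 : 0 < Defs.ratio f x b := lt_trans nu0 (rejected jl).
have m0 : 0 < Num.min 1 (1 / Defs.ratio f x b) by rewrite lt_min ltr01 divr_gt0.
have m1 : Num.min 1 (1 / Defs.ratio f x b) <= 1 by rewrite ge_min lexx.
have step_le1 : theta * Num.min 1 (1 / Defs.ratio f x b) <= 1.
  by apply: le_trans (ler_wpM2l (ltW theta0) m1) _; rewrite mulr1 ltW.
rewrite !mulr_gt0 //= -mulrA; apply: le_trans bg.
by rewrite ler_piMr // ltW.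
Qed.

Hypotheses (L0 : 0 < L) (Lip : lipschitz_with L (grad f)) (nu1 : nu < 1).

(* A rejected trial [b] has [nu < ratio <= L b]; the next trial is [theta b] or
   [theta b / ratio >= theta / L], both at least [theta nu / L]. *)
Lemma backtrack_ge : grad f x != 0 ->
  Num.min g0k (theta * nu / L) <= backtrack f x theta g0k l.
Proof.
move=> gx0; case: l rejected backtrack_gt0_le => [|j] rej bt_bounds /=.
  by rewrite ge_min lexx.
have /andP[b0 _] := bt_bounds j (leqnSn j).
have r := rej j (ltnSn j).
set b := backtrack f x theta g0k j in b0 r *.
have rL := ratio_le Lip gx0 b0.
set rb := Defs.ratio f x b in r rL *.
have rb0 : 0 < rb := lt_trans nu0 r.
rewrite ge_min; apply/orP; right.
have -> : b * theta * Num.min 1 (1 / rb) = theta * (b * Num.min 1 (1 / rb)).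
  by rewrite mulrAC mulrC.
rewrite -mulrA ler_pM2l //.
have [m1|m1] := leP 1 (1 / rb).
  by rewrite mulr1 ler_pdivrMr // mulrC (le_trans (ltW r) rL).
rewrite mul1r; apply: (@le_trans _ _ L^-1).
  by rewrite -[leRHS]mul1r ler_pM2r ?invr_gt0 // ltW.
by rewrite ler_pdivlMr // mulrC ler_pdivrMr // mulrC.
Qed.
End Backtracking.

Lemma telescope_cvg0 (R : realType) (a G : nat -> R) (c : R) : 0 < c ->
  (forall k, 0 <= a k) -> (forall k, 0 <= G k) ->
  (forall k, a k.+1 <= a k - c * G k) -> G @ \oo --> 0.
Proof.
move=> c0 a0 G0 decr.
have sum_le K : c * \sum_(0 <= k < K) G k <= a 0%N.
  suff : a K + c * \sum_(0 <= k < K) G k <= a 0%N by have := a0 K; lra.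
  elim: K => [|K IHK]; first by rewrite big_geq // mulr0 addr0.
  by rewrite big_nat_recr //= mulrDr; have := decr K; lra.
apply: cvg_series_cvg_0; apply: nondecreasing_is_cvgn.
  by apply: nondecreasing_series => k _ _; exact: G0.
exists (a 0%N / c) => _ [K _ <-]; rewrite /series /= ler_pdivlMr // mulrC.
exact: sum_le.
Qed.

Section ClusterPoints.
Variables (R : realType) (n : nat).
Local Notation V := 'rV[R]_n.
Variable x : nat -> V.

Lemma bounded_cluster (y : V) (D : R) :
  (forall k, dotv (x k - y) (x k - y) <= D) -> exists p, cluster (x @ \oo) p.
Proof.
move=> xD; set r := Num.sqrt D.
pose box := [set v : V | forall i, `[y 0 i - r, y 0 i + r]%classic (v 0 i)].
have box_compact : compact box.
  by apply: (@rV_compact _ _ (fun i => `[y 0 i - r, y 0 i + r]%classic)) => i;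
    exact: segment_compact.
have x_box k : box (x k).
  move=> i; rewrite /= in_itv /= -ler_distl -sqrtr_sqr /r ler_wsqrtr //.
  by apply: le_trans (xD k); have := coord_sqr_le_dotv (x k - y) i; rewrite !mxE.
have [p [_ px]] : box `&` cluster (x @ \oo) !=set0.
  by apply: box_compact; exists 0%N => // k _; exact: x_box.
by exists p.
Qed.

Lemma cluster_dotv_near (p : V) (P : nat -> Prop) (e : R) :
  cluster (x @ \oo) p -> (\forall k \near \oo, P k) -> 0 < e ->
  exists k, P k /\ dotv (p - x k) (p - x k) < e.
Proof.
move=> px Pnear e0.
set N := (n%:R : R); have N0 : 0 <= N by rewrite ler0n.
set dl := Num.min 1 (e / (N + 1)).
have N1 : 0 < N + 1 by rewrite ltr_wpDl.
have dl0 : 0 < dl by rewrite lt_min ltr01 divr_gt0.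
have dl1 : dl <= 1 by rewrite ge_min lexx.
have dle : dl * (N + 1) <= e by rewrite -ler_pdivlMr // ge_min lexx orbT.
have xP : (x @ \oo) (x @` P) by apply: filterS Pnear => k Pk; exists k.
have [_ [[k Pk <-]]] := px _ _ xP (nbhsx_ballx p dl dl0).
rewrite -ball_normE /= => pxk; exists k; split => //.
apply: le_lt_trans (dotv_le_mx_norm _) _; rewrite -/N.
have t2 : `|p - x k| ^+ 2 <= dl.
  apply: (@le_trans _ _ (dl ^+ 2)); last by rewrite expr2 ler_piMl // ltW.
  by rewrite (@ler_pXn2r _ 2%N) ?nnegrE ?normr_ge0 // ltW.
by have := ler_wpM2l N0 t2; lra.
Qed.

Lemma fejer_cvg_cluster (p : V) :
  (forall k, dotv (x k.+1 - p) (x k.+1 - p) <= dotv (x k - p) (x k - p)) ->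
  cluster (x @ \oo) p -> x @ \oo --> p.
Proof.
move=> decr px.
have mono k m : dotv (x (k + m)%N - p) (x (k + m)%N - p) <= dotv (x k - p) (x k - p).
  by elim: m => [|m IHm]; rewrite ?addn0 // addnS (le_trans (decr _)).
apply/cvgrPdist_lt => e e0.
have [k0 [_ xk0]] := cluster_dotv_near px (@filterT _ _ _) (exprn_gt0 2 e0).
exists k0 => // k /= k0k; apply: mx_norm_lt_dotv => //.
rewrite dotvNN -(subnKC k0k); apply: le_lt_trans (mono _ _) _.
by rewrite dotvNN.
Qed.

Lemma cluster_grad_eq0 (f : V -> R) (L : R) (p : V) :
  0 < L -> lipschitz_with L (grad f) ->
  (fun k => dotv (grad f (x k)) (grad f (x k))) @ \oo --> 0 ->
  cluster (x @ \oo) p -> grad f p = 0.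
Proof.
move=> L0 Lip G0 px; apply: dotv_eq0; apply/eqP; rewrite eq_le dotv_ge0 andbT.
apply/ler_addgt0Pr => e e0; rewrite add0r.
set K := 2 * L ^+ 2 + 2.
have K0 : 0 < K by rewrite ltr_wpDl // mulr_ge0 // sqr_ge0.
have w0 : 0 < e / K by rewrite divr_gt0.
have Gsmall : \forall k \near \oo, dotv (grad f (x k)) (grad f (x k)) < e / K.
  move/cvgrPdist_lt: G0 => /(_ _ w0); apply: filterS => k.
  by rewrite sub0r normrN ger0_norm ?dotv_ge0.
have [k [Gk pxk]] := cluster_dotv_near px Gsmall w0.
have := dotv_sqrD_le (grad f p - grad f (x k)) (grad f (x k)); rewrite subrK.
have := grad_dist_sqr_le L0 Lip p (x k).
have : L ^+ 2 * dotv (p - x k) (p - x k) <= L ^+ 2 * (e / K).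
  by rewrite ler_wpM2l ?sqr_ge0 // ltW.
have : 2 * (L ^+ 2 * (e / K)) + 2 * (e / K) = e by rewrite /K; field; rewrite gt_eqF.
lra.
Qed.
End ClusterPoints.

Lemma proj_int_bounds (R : realType) (a b t : R) : a <= b -> a <= proj_int a b t <= b.
Proof. by move=> ab; rewrite /proj_int le_min ab le_max lexx ge_min lexx. Qed.

Lemma algorithm3_steps (R : realType) (n : nat) (f : 'rV[R]_n -> R) (L : R)
    (mu nu hlo hup g00 beta theta tau eta : R) (x0 : 'rV[R]_n)
    (x : nat -> 'rV[R]_n) (h g0 : nat -> R) :
  0 < L -> lipschitz_with L (grad f) -> 0 < nu -> nu < 1 ->
  0 < hlo -> hlo <= g00 -> g00 <= hup -> 0 < theta -> theta < 1 ->
  algorithm3 f L mu nu hlo hup beta theta tau eta x0 g00 x h g0 ->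
  (forall k, grad f (x k) != 0) ->
  forall k, [/\ Num.min hlo (theta * nu / L) <= h k, h k <= hup
              & Defs.ratio f (x k) (h k) <= nu].
Proof.
move=> L0 Lip nu0 nu1 hlo0 hlo_g00 g00_hup theta0 theta1 [_ g00E alg] gx0.
have g0_bounds k : hlo <= g0 k <= hup.
  elim: k => [|k _]; first by rewrite g00E hlo_g00.
  have [_ _ ->] := alg k.
  by case: ifP => _; apply: proj_int_bounds; exact: le_trans g00_hup.
move=> k; have [[l [hE [rat rejected]]] _ _] := alg k.
have /andP[g0_lo g0_hi] := g0_bounds k.
have g0_pos : 0 < g0 k := lt_le_trans hlo0 g0_lo.
have /andP[_ h_le] := backtrack_gt0_le theta0 theta1 nu0 g0_pos rejected (leqnn l).
have h_ge := backtrack_ge theta0 theta1 nu0 g0_pos rejected L0 Lip nu1 (gx0 k).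
rewrite -hE in h_le h_ge; split => //; last exact: le_trans g0_hi.
by apply: le_trans h_ge; rewrite le_min !ge_min lexx orbT g0_lo.
Qed.

Lemma algorithm3_fejer (R : realType) (n : nat) (f : 'rV[R]_n -> R) (L : R)
    (mu nu hlo hup g00 beta theta tau eta : R) (x0 : 'rV[R]_n)
    (x : nat -> 'rV[R]_n) (h g0 : nat -> R) :
  convex_fun f -> (forall y, differentiable f y) ->
  0 < L -> lipschitz_with L (grad f) -> 0 < nu -> nu < 1 ->
  0 < hlo -> hlo <= g00 -> g00 <= hup -> hup < 4 / L ->
  0 <= beta -> beta <= 1 -> 0 < theta -> theta < 1 -> 0 < eta -> eta < 2 ->
  algorithm3 f L mu nu hlo hup beta theta tau eta x0 g00 x h g0 ->
  (forall k, grad f (x k) != 0) ->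
  exists2 C : R, 0 < C & forall xs k, grad f xs = 0 ->
    dotv (x k.+1 - xs) (x k.+1 - xs)
      <= dotv (x k - xs) (x k - xs) - C * dotv (grad f (x k)) (grad f (x k)).
Proof.
move=> fconv fdiff L0 Lip nu0 nu1 hlo0 hlo_g00 g00_hup hup4 beta0 beta1
  theta0 theta1 eta0 eta2 alg gx0.
have steps := algorithm3_steps L0 Lip nu0 nu1 hlo0 hlo_g00 g00_hup theta0 theta1 alg gx0.
set hmin := Num.min hlo (theta * nu / L).
set c := Num.min (1 - L * hup / 4) ((1 - nu ^+ 2) / 2).
have hmin0 : 0 < hmin by rewrite lt_min hlo0 /= divr_gt0 // mulr_gt0.
have c0 : 0 < c.
  rewrite lt_min !subr_gt0 divr_gt0 ?subr_gt0 ?expr_lt1 ?ltW //= andbT.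
  by rewrite ltr_pdivrMr // mul1r mulrC -ltr_pdivlMr.
exists (eta * (2 - eta) * (hmin * c) ^+ 2 / 4).
  by rewrite divr_gt0 // !mulr_gt0 ?exprn_gt0 ?subr_gt0.
move=> xs k gxs; have [h_ge h_le rat] := steps k.
have [_ _ /(_ k) [_ x_next _]] := alg.
have h0 : 0 < h k := lt_le_trans hmin0 h_ge.
apply: (fejer_step Lip fdiff fconv L0 beta0 beta1 h0 gxs (gx0 k) rat _ _ _ _ _ x_next).
- by rewrite !ltW.
- by [].
- by rewrite ge_min lerD2l lerN2 ler_pM2r ?invr_gt0 // ler_pM2l // h_le.
- by rewrite ge_min lexx orbT.
- by rewrite ltW.
Qed.

Theorem theorem5 (R : realType) (n : nat) (f : 'rV[R]_n -> R) (L : R)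
    (mu nu hlo hup g00 beta theta tau eta : R) (x0 : 'rV[R]_n)
    (x : nat -> 'rV[R]_n) (h g0 : nat -> R) :
  convex_fun f ->
  (forall y : 'rV[R]_n, differentiable f y) ->
  0 < L -> lipschitz_with L (grad f) ->
  (exists xs : 'rV[R]_n, grad f xs = 0) ->
  0 < mu -> mu < nu -> nu < 1 ->
  0 < hlo -> hlo < 1 -> 1 <= g00 -> g00 <= hup -> hup < 4 / L ->
  0 <= beta -> beta <= 1 ->
  0 < theta -> theta < 1 -> 1 < tau -> 0 < eta -> eta < 2 ->
  algorithm3 f L mu nu hlo hup beta theta tau eta x0 g00 x h g0 ->
  (forall k : nat, grad f (x k) != 0) ->
  exists2 xs : 'rV[R]_n, grad f xs = 0 & x @ \oo --> xs.
Proof.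
move=> fconv fdiff L0 Lip [xs0 gxs0] mu0 mu_nu nu1 hlo0 hlo1 g001 g00_hup hup4
  beta0 beta1 theta0 theta1 _ eta0 eta2 alg gx0.
have [C C0 fejer] := algorithm3_fejer fconv fdiff L0 Lip (lt_trans mu0 mu_nu) nu1
  hlo0 (le_trans (ltW hlo1) g001) g00_hup hup4 beta0 beta1 theta0 theta1 eta0 eta2 alg gx0.
have fejer_mono xs k : grad f xs = 0 ->
    dotv (x k.+1 - xs) (x k.+1 - xs) <= dotv (x k - xs) (x k - xs).
  move=> gxs; apply: le_trans (fejer xs k gxs) _.
  by rewrite gerBl mulr_ge0 ?dotv_ge0 // ltW.
have G_cvg : (fun k => dotv (grad f (x k)) (grad f (x k))) @ \oo --> 0.
  apply: (telescope_cvg0 C0 (fun k => dotv_ge0 (x k - xs0))) => k.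
    exact: dotv_ge0.
  exact: fejer.
have [p px] : exists p, cluster (x @ \oo) p.
  apply: (@bounded_cluster _ _ _ xs0 (dotv (x 0%N - xs0) (x 0%N - xs0))).
  by elim=> // k IHk; apply: le_trans (fejer_mono _ _ gxs0) IHk.
have gp := cluster_grad_eq0 L0 Lip G_cvg px.
by exists p => //; apply: fejer_cvg_cluster px => k; exact: fejer_mono.
Qed.
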